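(* Let $n\ge2$ and let $X_1,\dots,X_n$ be operators in a complex Hilbert space $\mathcal{H}$, each Hermitian or skew-Hermitian, defined on a common invariant domain $D$. Let $m$ be a sequence of positive numbers satisfying (A0), (A1), (A2) and (A3'): there is $L\ge1$ with $p\,m_{p-1}\le L\,m_p$ for all $p\ge1$; set $m^{(1)}=\dots=m^{(n)}=m$, $\mathbf{m}=(m,\dots,m)$ ($n$ entries), $\mathbf{m}'=(m,\dots,m)$ ($n-1$ entries), $\mathbf{X}=(X_1,\dots,X_n)$, $\mathbf{X}'=(X_1,\dots,X_{n-1})$. If $[X_j,X_n]\in\mathrm{span}\{X_1,\dots,X_n\}$ (on $D$) for every $j\in\{1,\dots,n-1\}$, then $u\in D$ belongs to $\mathcal{S}_{\mathbf{m}}(\mathbf{X})$ if and only if $u\in\mathcal{S}_{\mathbf{m}'}(\mathbf{X}')\cap\mathcal{S}_m(X_n)$.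
   Context: A common invariant domain $D$ means $D\subset\mathrm{Dom}(X_j)$ and $X_jD\subset D$ for all $j$. Notation: for $N\ge1$, $M(N)=\bigcup_{k\ge1}\{1,\dots,N\}^k$; for $\alpha=(i_1,\dots,i_k)$, $|\alpha|=k$, $|\alpha|_j=\mathrm{card}\{l:i_l=j\}$. For operators $\mathbf{Y}=(Y_1,\dots,Y_N)$, $\mathbf{Y}_\alpha=Y_{i_1}\cdots Y_{i_k}$ and $C^\infty(\mathbf{Y})=\{u: u\in\mathrm{Dom}(\mathbf{Y}_\alpha)\ \forall\alpha\in M(N)\}$. For sequences $\mathbf{p}=(p^{(1)},\dots,p^{(N)})$, $\mathbf{p}_\alpha=p^{(1)}_{|\alpha|_1}\cdots p^{(N)}_{|\alpha|_N}$ and $\mathcal{S}_{\mathbf{p}}(\mathbf{Y})=\{u\in C^\infty(\mathbf{Y}):\exists A,C>0,\ \|\mathbf{Y}_\alpha u\|\le CA^{|\alpha|}\mathbf{p}_\alpha\ \forall\alpha\in M(N)\}$ (for a single operator $Y$ and sequence $m$: $\|Y^ku\|\le CA^km_k$ for all $k\ge1$). Conditions: (A0) $m_0=m_1=1$; (A1) $m_p^2\le m_{p-1}m_{p+1}$ for $p\ge1$; (A2) there is $H>0$ with $m_{p+q}\le H^{p+q}m_pm_q$ for all $p,q\in\mathbb{N}$. *)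

From mathcomp Require Import all_boot all_order all_algebra.
From mathcomp Require Import all_reals.
From mathcomp Require Export complex.

Set Implicit Arguments.
Unset Strict Implicit.
Unset Printing Implicit Defensive.
Import Order.TTheory GRing.Theory Num.Theory.
Local Open Scope ring_scope.

Section Defs.
Variable R : realType.
Variable V : lmodType R[i].
Variable ip : V -> V -> R[i].

Definition hnorm (u : V) : R := Num.sqrt (complex.Re (ip u u)).

Definition is_inner_product : Prop :=
  [/\ (forall (a : R[i]) (u v w : V), ip (a *: u + v) w = a * ip u w + ip v w),
      (forall u v : V, ip u v = (ip v u)^*),
      (forall u : V, 0 <= ip u u) &
      (forall u : V, ip u u = 0 -> u = 0)].

Definition is_complete : Prop :=
  forall s : nat -> V,
    (forall e : R, 0 < e -> exists N, forall p q, (N <= p)%N -> (N <= q)%N ->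
        hnorm (s p - s q) < e) ->
    exists l : V, forall e : R, 0 < e -> exists N, forall p, (N <= p)%N ->
        hnorm (s p - l) < e.

Definition hilbert_space : Prop := is_inner_product /\ is_complete.

Definition subspace (D : V -> Prop) : Prop :=
  D 0 /\ forall (a : R[i]) u v, D u -> D v -> D (a *: u + v).

Definition linear_on (D : V -> Prop) (Y : V -> V) : Prop :=
  forall (a : R[i]) u v, D u -> D v -> Y (a *: u + v) = a *: Y u + Y v.

Definition hermitian_on (D : V -> Prop) (Y : V -> V) : Prop :=
  forall u v, D u -> D v -> ip (Y u) v = ip u (Y v).

Definition skew_hermitian_on (D : V -> Prop) (Y : V -> V) : Prop :=
  forall u v, D u -> D v -> ip (Y u) v = - ip u (Y v).

(* Y_alpha u = Y_{i1} (Y_{i2} ( ... (Y_{ik} u))) for alpha = [:: i1; ...; ik] *)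
Definition opword (N : nat) (Y : 'I_N -> V -> V) (alpha : seq 'I_N) (u : V) : V :=
  foldr (fun i w => Y i w) u alpha.

Definition seq_weight (N : nat) (p : 'I_N -> nat -> R) (alpha : seq 'I_N) : R :=
  \prod_(j < N) p j (count_mem j alpha).

(* S_p(Y) (for vectors where all Y_alpha u are defined; here operators are total) *)
Definition S_vec (N : nat) (Y : 'I_N -> V -> V) (p : 'I_N -> nat -> R) (u : V) : Prop :=
  exists A Cc : R, 0 < A /\ 0 < Cc /\
    forall alpha : seq 'I_N, (0 < size alpha)%N ->
      hnorm (opword Y alpha u) <= Cc * A ^+ size alpha * seq_weight p alpha.

Definition S_vec1 (Y : V -> V) (m : nat -> R) (u : V) : Prop :=
  exists A Cc : R, 0 < A /\ 0 < Cc /\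
    forall k : nat, (1 <= k)%N -> hnorm (iter k Y u) <= Cc * A ^+ k * m k.

End Defs.

Section SeqConds.
Variable R : realType.
Variable m : nat -> R.
Definition cond_A0 : Prop := m 0 = 1 /\ m 1 = 1.
Definition cond_A1 : Prop := forall p, (1 <= p)%N -> m p ^+ 2 <= m p.-1 * m p.+1.
Definition cond_A2 : Prop :=
  exists H : R, 0 < H /\ forall p q : nat, m (p + q) <= H ^+ (p + q) * m p * m q.
Definition cond_A3' : Prop :=
  exists L : R, 1 <= L /\ forall p : nat, (1 <= p)%N -> p%:R * m p.-1 <= L * m p.
End SeqConds.

From mathcomp Require Import all_boot all_order all_algebra all_reals complex.
From mathcomp Require Import ring lra zify.
Import Order.TTheory GRing.Theory Num.Theory.
Set Implicit Arguments.
Unset Strict Implicit.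
Unset Printing Implicit Defensive.
Import Normc.
Local Open Scope ring_scope.

(* For a word [al] of length [k], (skew-)symmetry gives
   [|X_al u|^2 <= |<u, X_(rev al ++ al) u>|], so it suffices to bound the pairings
   [|<u, X_g u>|] of words [g] of length [2k].  An occurrence of some [X_j], [j < n],
   to the left of an [X_n] is an inversion; the commutation relation
   [X_j X_n = X_n X_j + sum_k c_jk X_k] replaces a word by one with one inversion
   less plus words that are one letter shorter.  Sorted words [X_n^a X'_b] are
   bounded by Cauchy-Schwarz and the hypotheses on [X_n] and [X'].  A double
   induction on the length [l] and the number [i] of inversions bounds the pairing
   by [K (B N)^l m_l / l! * (1 + 1/2N)^i]: (A3') pays for the shortenings, and at
   the end [N^N / N! <= 4^N] and [(1 + 1/2N)^(N^2) <= 2^N].  (A1) and (A2)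
   translate between [m_|al|] and the multi-index weight [m_al]. *)

Section LogConvex.
Variables (R : realType) (m : nat -> R).
Hypothesis m_gt0 : forall p, 0 < m p.
Hypothesis m0 : m 0 = 1.
Hypothesis m_logconvex : cond_A1 m.

Lemma logconvex_ratio_le p s : m p.+1 * m (p + s) <= m (p + s).+1 * m p.
Proof.
elim: s => [|s IH]; first by rewrite addn0 mulrC.
rewrite addnS; set q := (p + s)%N in IH *.
have convex_q : m q.+1 ^+ 2 <= m q * m q.+2 := m_logconvex (isT : (1 <= q.+1)%N).
rewrite -(ler_pM2r (mulr_gt0 (m_gt0 q) (m_gt0 q.+1))).
have -> : m p.+1 * m q.+1 * (m q * m q.+1) = m p.+1 * m q * m q.+1 ^+ 2.
  by rewrite expr2; ring.
have -> : m q.+2 * m p * (m q * m q.+1) = m q.+1 * m p * (m q * m q.+2) by ring.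
by apply: ler_pM; rewrite ?mulr_ge0 ?exprn_ge0 ?(ltW (m_gt0 _)).
Qed.

Lemma logconvex_superadditive a b : m a * m b <= m (a + b).
Proof.
elim: a => [|a IH]; first by rewrite m0 mul1r.
rewrite -(ler_pM2r (m_gt0 a)) addSn.
apply: le_trans (logconvex_ratio_le a b).
by rewrite -mulrA ler_pM2l // mulrC.
Qed.

Lemma logconvex_prod_le (I : Type) (r : seq I) (f : I -> nat) :
  \prod_(i <- r) m (f i) <= m (\sum_(i <- r) f i).
Proof.
elim: r => [|x r IH]; first by rewrite !big_nil m0.
by rewrite !big_cons; apply: le_trans (logconvex_superadditive _ _); rewrite ler_pM2l.
Qed.

End LogConvex.

Section Moderate.
Variables (R : realType) (m : nat -> R) (H : R).
Hypothesis m_gt0 : forall p, 0 < m p.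
Hypothesis m0 : m 0 = 1.
Hypothesis H_ge1 : 1 <= H.
Hypothesis m_moderate : forall p q : nat, m (p + q) <= H ^+ (p + q) * m p * m q.

Lemma moderate_sum_le (I : Type) (r : seq I) (f : I -> nat) :
  m (\sum_(i <- r) f i) <= H ^+ (size r * \sum_(i <- r) f i) * \prod_(i <- r) m (f i).
Proof.
elim: r => [|x r IH]; first by rewrite !big_nil m0 mul1r.
rewrite !big_cons /=; set S := (\sum_(i <- r) f i)%N; set P := \prod_(i <- r) m (f i).
have P_ge0 : 0 <= P by apply: prodr_ge0 => i _; apply: ltW.
apply: le_trans (m_moderate _ _) _.
have Hm_ge0 : 0 <= H ^+ (f x + S) * m (f x).
  by rewrite mulr_ge0 ?exprn_ge0 ?(le_trans ler01 H_ge1) ?(ltW (m_gt0 _)).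
apply: le_trans (ler_wpM2l Hm_ge0 IH) _.
have -> : H ^+ (f x + S) * m (f x) * (H ^+ (size r * S) * P) =
          H ^+ (f x + S + size r * S) * (m (f x) * P) by rewrite !exprD; ring.
rewrite ler_wpM2r ?mulr_ge0 ?(ltW (m_gt0 _)) //.
by apply: ler_weXn2l => //; nia.
Qed.

End Moderate.

Lemma sum_count_mem_ord N (b : seq 'I_N) : (\sum_(j < N) count_mem j b)%N = size b.
Proof.
elim: b => [|x b IH]; first by rewrite big1.
rewrite /= big_split /= IH -add1n; congr (_ + _)%N.
rewrite (bigD1 x) //= eqxx big1 // => j /negbTE.
by rewrite eq_sym => ->.
Qed.

Lemma size_index_enum_ord N : size (index_enum 'I_N) = N.
Proof. by rewrite /index_enum unlock -enumT -cardT card_ord. Qed.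

Lemma widen_ord_neq_max n (j : 'I_n) : widen_ord (leqnSn n) j != ord_max.
Proof. by rewrite -val_eqE /= neq_ltn ltn_ord. Qed.

Lemma count_max_widen n (b : seq 'I_n) : count_mem ord_max (map (widen_ord (leqnSn n)) b) = 0%N.
Proof.
by apply/count_memPn/mapP => -[j _ /eqP]; rewrite eq_sym (negbTE (widen_ord_neq_max j)).
Qed.

Section SeqWeight.
Variables (R : realType) (m : nat -> R).
Hypothesis m_gt0 : forall p, 0 < m p.
Hypothesis m0 : m 0 = 1.
Local Notation weight := (seq_weight (fun _ => m)).

Lemma seq_weight_ge0 N (b : seq 'I_N) : 0 <= weight b.
Proof. by apply: prodr_ge0 => j _; apply: ltW. Qed.

Lemma seq_weight_le_m (m_logconvex : cond_A1 m) N (b : seq 'I_N) :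
  weight b <= m (size b).
Proof. by rewrite /seq_weight -sum_count_mem_ord; apply: logconvex_prod_le. Qed.

Lemma m_le_seq_weight H (H_ge1 : 1 <= H)
    (m_moderate : forall p q : nat, m (p + q) <= H ^+ (p + q) * m p * m q)
    N (b : seq 'I_N) :
  m (size b) <= H ^+ (N * size b) * weight b.
Proof.
rewrite /seq_weight -{1 2}sum_count_mem_ord.
have := moderate_sum_le m_gt0 m0 H_ge1 m_moderate (index_enum 'I_N) (fun j => count_mem j b).
by rewrite size_index_enum_ord.
Qed.

Lemma m_double_le_seq_weight H (H_ge1 : 1 <= H)
    (m_moderate : forall p q : nat, m (p + q) <= H ^+ (p + q) * m p * m q)
    N (b : seq 'I_N) :
  m (size b + size b) <= (H ^+ (N.+1 * size b) * weight b) ^+ 2.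
Proof.
have mk_le := m_le_seq_weight H_ge1 m_moderate b.
set k := size b in mk_le *; set w := weight b in mk_le *.
have -> : (H ^+ (N.+1 * k) * w) ^+ 2 = H ^+ (k + k) * ((H ^+ (N * k) * w) * (H ^+ (N * k) * w)).
  by rewrite mulSn !exprD; ring.
apply: le_trans (m_moderate _ _) _.
rewrite -mulrA ler_wpM2l ?exprn_ge0 ?(le_trans ler01 H_ge1) //.
by apply: ler_pM; rewrite ?(ltW (m_gt0 _)).
Qed.

Lemma seq_weight_widen n (b : seq 'I_n) :
  weight (map (widen_ord (leqnSn n)) b) = weight b.
Proof.
rewrite /seq_weight big_ord_recr /= count_max_widen m0 mulr1.
by apply: eq_bigr => j _; rewrite count_map; congr (m _); apply: eq_count => x /=.
Qed.

Lemma seq_weight_nseq_max n k : weight (nseq k (@ord_max n)) = m k.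
Proof.
rewrite /seq_weight big_ord_recr /= count_nseq big1 => [|j _].
  by rewrite mul1r inE eqxx mul1n.
by rewrite count_nseq inE eq_sym (negbTE (widen_ord_neq_max j)) mul0n.
Qed.

End SeqWeight.

Section ComplexModulus.
Variable R : rcfType.
Implicit Types z : R[i].

Lemma normr_normc z : `|z| = (normc z : R)%:C%C.
Proof. by case: z. Qed.

Lemma normc_ge0 z : 0 <= normc z.
Proof. by case: z => a b; apply: sqrtr_ge0. Qed.

Lemma normc_conj z : normc z^* = normc z.
Proof. by apply: complexI; rewrite -!normr_normc norm_conjC. Qed.

Lemma Re_le_normc z : complex.Re z <= normc z.
Proof. by apply: le_trans (ler_norm _) _; rewrite -lecR -normr_normc normc_ge_Re. Qed.

Lemma normc_sum (I : Type) (r : seq I) (F : I -> R[i]) :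
  normc (\sum_(i <- r) F i) <= \sum_(i <- r) normc (F i).
Proof.
elim: r => [|x r IH]; first by rewrite !big_nil normc0.
by rewrite !big_cons; apply: le_trans (le_normcD _ _) _; rewrite lerD2l.
Qed.

End ComplexModulus.

Section InnerProduct.
Variables (R : realType) (V : lmodType R[i]) (ip : V -> V -> R[i]).
Hypothesis ip_inner : is_inner_product ip.

Lemma ipDl a u v w : ip (a *: u + v) w = a * ip u w + ip v w.
Proof. by case: ip_inner. Qed.

Lemma ipC u v : ip u v = (ip v u)^*.
Proof. by case: ip_inner. Qed.

Lemma ipxx_ge0 u : 0 <= ip u u.
Proof. by case: ip_inner. Qed.

Lemma ipDr a u v w : ip w (a *: u + v) = a^* * ip w u + ip w v.
Proof. by rewrite ipC ipDl rmorphD rmorphM /= -!ipC. Qed.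

Lemma ip0l w : ip 0 w = 0.
Proof. by have := ipDl (-1) 0 0 w; rewrite scaler0 addr0 mulN1r addNr. Qed.

Lemma ip0r w : ip w 0 = 0.
Proof. by rewrite ipC ip0l conjC0. Qed.

Lemma ip_addr w a b : ip w (a + b) = ip w a + ip w b.
Proof. by have := ipDr 1 a b w; rewrite scale1r conjC1 mul1r. Qed.

Lemma ip_sumr w (I : Type) (r : seq I) (c : I -> R[i]) (b : I -> V) :
  ip w (\sum_(i <- r) c i *: b i) = \sum_(i <- r) (c i)^* * ip w (b i).
Proof.
elim: r => [|x r IH]; first by rewrite !big_nil ip0r.
by rewrite !big_cons ipDr IH.
Qed.

Lemma normc_ipC a b : normc (ip a b) = normc (ip b a).
Proof. by rewrite ipC normc_conj. Qed.

Lemma ipxx_real u : ip u u = (complex.Re (ip u u))%:C%C.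
Proof. by rewrite RRe_real // ger0_real // ipxx_ge0. Qed.

Lemma Re_ipxx_ge0 u : 0 <= complex.Re (ip u u).
Proof. by rewrite -ler0c -ipxx_real ipxx_ge0. Qed.

Lemma ip_cauchy_schwarz a b : `|ip a b| ^+ 2 <= ip a a * ip b b.
Proof.
have [b0|bb_neq0] := eqVneq (ip b b) 0.
  have -> : b = 0 by case: ip_inner => _ _ _; apply.
  by rewrite ip0r normr0 expr0n /= ip0l mulr0.
set Ab := ip a b; set B := ip b b.
have BJ : B^* = B by apply/eqP; rewrite -CrealE ger0_real // ipxx_ge0.
have B_gt0 : 0 < B by rewrite lt_def bb_neq0 ipxx_ge0.
(* expand <a - t b, a - t b> >= 0 at the minimiser t = <a, b> / <b, b> *)
have := ipxx_ge0 ((- (Ab / B)) *: b + a).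
rewrite ipDl !ipDr -/B -/Ab [ip b a]ipC -/Ab rmorphN /= rmorphM /= fmorphV /= BJ.
have -> : - (Ab / B) * (- (Ab^* / B) * B + Ab^*) + (- (Ab^* / B) * Ab + ip a a) =
          ip a a - Ab * Ab^* / B by field; exact: bb_neq0.
by rewrite subr_ge0 normCK -(ler_pM2r B_gt0) divfK.
Qed.

Lemma normc_ip_le a b : normc (ip a b) <= hnorm ip a * hnorm ip b.
Proof.
have := ip_cauchy_schwarz a b.
rewrite normr_normc [ip a a]ipxx_real [ip b b]ipxx_real -rmorphXn -rmorphM /= lecR => h.
rewrite /hnorm -sqrtrM ?Re_ipxx_ge0 // -(ger0_norm (normc_ge0 (ip a b))) -sqrtr_sqr.
by rewrite ler_sqrt // mulr_ge0 ?Re_ipxx_ge0.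
Qed.

Lemma hnorm_sqr u : hnorm ip u ^+ 2 = complex.Re (ip u u).
Proof. by rewrite /hnorm sqr_sqrtr // Re_ipxx_ge0. Qed.

End InnerProduct.

Lemma hnorm_ge0 (R : realType) (V : lmodType R[i]) (ip : V -> V -> R[i]) u :
  0 <= hnorm ip u.
Proof. exact: sqrtr_ge0. Qed.

Section Inversions.
Variable n : nat.
Local Notation top := (@ord_max n).
Local Notation widen := (widen_ord (leqnSn n)).

Fixpoint inversions (s : seq 'I_n.+1) : nat :=
  if s is x :: s' then ((x != top) * count_mem top s' + inversions s')%N else 0%N.

Lemma ord_neq_max_widen (x : 'I_n.+1) : x != top -> exists j : 'I_n, x = widen j.
Proof.
move=> x_neq; have x_lt : (x < n)%N.
  by move: x_neq; rewrite ltn_neqAle -ltnS ltn_ord andbT -val_eqE.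
by exists (Ordinal x_lt); apply: val_inj.
Qed.

Lemma inversions_cat s t :
  inversions (s ++ t) =
  (inversions s + count (predC1 top) s * count_mem top t + inversions t)%N.
Proof. by elim: s => [|x s IH] //=; rewrite IH count_cat; case: (x != top) => /=; lia. Qed.

Lemma inversions_le s : (inversions s <= size s * size s)%N.
Proof.
by elim: s => [|x s IH] //=; have := count_size (pred1 top) s; case: (x != top) => /=; nia.
Qed.

Lemma inversions_swap s1 j s2 :
  inversions (s1 ++ widen j :: top :: s2) = (inversions (s1 ++ top :: widen j :: s2)).+1.
Proof. by rewrite !inversions_cat /= eqxx widen_ord_neq_max /=; lia. Qed.

Lemma inversions_contract s1 j k s2 :
  (inversions (s1 ++ k :: s2) < inversions (s1 ++ widen j :: top :: s2))%N.
Proof.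
rewrite !inversions_cat /= eqxx widen_ord_neq_max /=.
by have := count_size (pred1 top) s2; case: (k == top) => /=; nia.
Qed.

Lemma inversions_eq0 s :
  inversions s = 0%N -> exists a (b : seq 'I_n), s = nseq a top ++ map widen b.
Proof.
elim: s => [|x s IH] /=; first by exists 0%N, [::].
move=> inv0; have [a [b s_eq]] : exists a (b : seq 'I_n), s = nseq a top ++ map widen b.
  by apply: IH; lia.
have [->|x_neq] := eqVneq x top; first by exists a.+1, b; rewrite s_eq.
move: inv0; rewrite s_eq x_neq count_cat count_nseq count_max_widen inE eqxx.
have [j ->] := ord_neq_max_widen x_neq.
by case: a {s_eq} => [|a] /= inv0; [exists 0%N, (j :: b) | lia].
Qed.

Lemma inversions_gt0 s :
  (0 < inversions s)%N -> exists s1 (j : 'I_n) s2, s = s1 ++ widen j :: top :: s2.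
Proof.
elim: s => [|x s IH] //=.
have [inv0|inv_gt0 _] := posnP (inversions s); last first.
  by have [s1 [j [s2 ->]]] := IH inv_gt0; exists (x :: s1), j, s2.
have [a [b s_eq]] := inversions_eq0 inv0.
have [->|x_neq] := eqVneq x top; first by rewrite inv0.
rewrite inv0 s_eq count_cat count_nseq count_max_widen inE eqxx.
have [j ->] := ord_neq_max_widen x_neq.
by case: a {s_eq} => [|a] /= pos; [lia | exists [::], j, (nseq a top ++ map widen b)].
Qed.

End Inversions.

Section Words.
Variables (R : realType) (V : lmodType R[i]).

Lemma opword_cat N (Y : 'I_N -> V -> V) s t u :
  opword Y (s ++ t) u = opword Y s (opword Y t u).
Proof. by rewrite /opword foldr_cat. Qed.

Lemma opword_map N M (Y : 'I_M -> V -> V) (f : 'I_N -> 'I_M) (b : seq 'I_N) u :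
  opword Y (map f b) u = opword (fun j => Y (f j)) b u.
Proof. by elim: b => [|x b IH] //=; rewrite IH. Qed.

Lemma opword_nseq M (Y : 'I_M -> V -> V) j k u : opword Y (nseq k j) u = iter k (Y j) u.
Proof. by elim: k => [|k IH] //=; rewrite IH. Qed.

Variables (ip : V -> V -> R[i]) (N : nat) (X : 'I_N -> V -> V) (D : V -> Prop).
Hypothesis D_subspace : subspace D.
Hypothesis X_stable : forall j u, D u -> D (X j u).
Hypothesis X_linear : forall j, linear_on D (X j).

Lemma opword_stable s u : D u -> D (opword X s u).
Proof. by move=> Du; elim: s => [|x s IH] //=; apply: X_stable. Qed.

Lemma subspace_sum (I : Type) (r : seq I) (c : I -> R[i]) (b : I -> V) :
  (forall i, D (b i)) -> D (\sum_(i <- r) c i *: b i).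
Proof.
move=> Db; elim: r => [|x r IH]; first by rewrite big_nil; case: D_subspace.
by rewrite big_cons; apply: (proj2 D_subspace).
Qed.

Lemma linear_on_opword s : linear_on D (opword X s).
Proof.
elim: s => [|x s IH] a u v Du Dv //=.
by rewrite IH // X_linear //; apply: opword_stable.
Qed.

Lemma linear_onD f u v : linear_on D f -> D u -> D v -> f (u + v) = f u + f v.
Proof. by move=> f_lin Du Dv; have := f_lin 1 u v Du Dv; rewrite !scale1r. Qed.

Lemma linear_on0 f : linear_on D f -> f 0 = 0.
Proof.
move=> f_lin; have D0 : D 0 by case: D_subspace.
have := linear_onD f_lin D0 D0; rewrite addr0 => f0.
by apply: (addrI (f 0)); rewrite addr0 -f0.
Qed.

Lemma linear_on_sum f (I : Type) (r : seq I) (c : I -> R[i]) (b : I -> V) :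
  linear_on D f -> (forall i, D (b i)) ->
  f (\sum_(i <- r) c i *: b i) = \sum_(i <- r) c i *: f (b i).
Proof.
move=> f_lin Db; elim: r => [|x r IH]; first by rewrite !big_nil linear_on0.
by rewrite !big_cons f_lin ?IH //; apply: subspace_sum.
Qed.

Hypothesis X_sym : forall j, hermitian_on ip D (X j) \/ skew_hermitian_on ip D (X j).

Lemma normc_ip_opword_adjoint s a b : D a -> D b ->
  normc (ip (opword X s a) b) = normc (ip a (opword X (rev s) b)).
Proof.
elim: s a b => [|x s IH] a b Da Db //=.
have normc_ip_X : normc (ip (X x (opword X s a)) b) = normc (ip (opword X s a) (X x b)).
  by case: (X_sym x) => ->; rewrite ?normcN //; apply: opword_stable.
rewrite normc_ip_X IH //; last exact: X_stable.
by rewrite rev_cons -cats1 opword_cat.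
Qed.

End Words.

Section RealEstimates.
Variable R : realFieldType.

Lemma expr1D_mulB_le1 (x : R) M : 0 <= x -> (1 + x) ^+ M * (1 - M%:R * x) <= 1.
Proof.
move=> x_ge0; elim: M => [|M IH]; first by rewrite expr0 mul0r subr0 mulr1.
have pow_ge0 : 0 <= (1 + x) ^+ M by apply: exprn_ge0; lra.
apply: le_trans IH; rewrite exprS -mulrA mulrCA ler_wpM2l //.
have : 0 <= M%:R :> R by rewrite ler0n.
by rewrite -natr1; nra.
Qed.

Lemma expr_half_inv_le2 N : (0 < N)%N -> (1 + (2 * N%:R)^-1) ^+ N <= 2 :> R.
Proof.
move=> N_gt0; have N_gt0' : 0 < N%:R :> R by rewrite ltr0n.
have inv_ge0 : 0 <= (2 * N%:R)^-1 :> R by rewrite invr_ge0; lra.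
have := expr1D_mulB_le1 N inv_ge0.
have -> : 1 - N%:R * (2 * N%:R)^-1 = 2^-1 :> R by field; lra.
by lra.
Qed.

(* (1 + 1/N)^N <= (1 + 1/(2N))^(2N) <= 4 *)
Lemma exprn_natS_le N : N.+1%:R ^+ N <= 4 * N%:R ^+ N :> R.
Proof.
case: N => [|N]; first by rewrite !expr0; lra.
set M := N.+1; have M_gt0 : 0 < M%:R :> R by rewrite ltr0n.
set rho := 1 + (2 * M%:R)^-1 : R.
have inv_ge0 : 0 <= (2 * M%:R)^-1 :> R by rewrite invr_ge0; lra.
have rho_ge0 : 0 <= rho by rewrite /rho; lra.
have Sn_le : M.+1%:R <= M%:R * rho ^+ 2 :> R.
  have : 2 * M%:R * (2 * M%:R)^-1 = 1 :> R by rewrite mulfV //; lra.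
  by rewrite /rho -natr1 expr2; nra.
apply: (@le_trans _ _ ((M%:R * rho ^+ 2) ^+ M)).
  by rewrite lerXn2r // nnegrE ?ler0n // mulr_ge0 ?exprn_ge0 // ler0n.
rewrite exprMn mulrC ler_wpM2r ?exprn_ge0 ?ler0n // -exprM mulnC exprM.
have -> : 4 = 2 ^+ 2 :> R by rewrite expr2; lra.
by rewrite lerXn2r ?nnegrE ?exprn_ge0 // ?expr_half_inv_le2 //; lra.
Qed.

Lemma exprnn_le_fact N : N%:R ^+ N <= 4 ^+ N * N`!%:R :> R.
Proof.
elim: N => [|N IH]; first by rewrite !expr0 fact0 mulr1.
rewrite exprS factS natrM.
apply: (@le_trans _ _ (N.+1%:R * (4 * N%:R ^+ N))).
  by rewrite ler_wpM2l ?ler0n ?exprn_natS_le.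
have -> : 4 ^+ N.+1 * (N.+1%:R * N`!%:R) = N.+1%:R * (4 * (4 ^+ N * N`!%:R)) :> R.
  by rewrite exprS; ring.
by rewrite ler_wpM2l ?ler0n // ler_wpM2l.
Qed.

End RealEstimates.

Lemma fact_le_expn l N : (l <= N)%N -> (l`! <= N ^ l)%N.
Proof.
elim: l => [|l IH] l_le //.
by rewrite factS expnS leq_mul // IH // ltnW.
Qed.

Section Reordering.
Variables (R : realType) (V : lmodType R[i]) (ip : V -> V -> R[i]).
Hypothesis ip_inner : is_inner_product ip.
Variables (n : nat) (X : 'I_n.+1 -> V -> V) (D : V -> Prop).
Hypothesis D_subspace : subspace D.
Hypothesis X_stable : forall j u, D u -> D (X j u).
Hypothesis X_linear : forall j, linear_on D (X j).
Local Notation top := (@ord_max n).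
Local Notation widen := (widen_ord (leqnSn n)).
Variable c : 'I_n -> 'I_n.+1 -> R[i].
Hypothesis X_commute : forall j v, D v ->
  X (widen j) (X top v) - X top (X (widen j) v) = \sum_(k < n.+1) c j k *: X k v.
Variable u : V.
Hypothesis Du : D u.

Definition pairing (g : seq 'I_n.+1) : R := normc (ip u (opword X g u)).

Lemma pairing_commute s1 j s2 :
  pairing (s1 ++ widen j :: top :: s2) <=
  pairing (s1 ++ top :: widen j :: s2) +
  \sum_(k < n.+1) normc (c j k) * pairing (s1 ++ k :: s2).
Proof.
rewrite /pairing !opword_cat /=; set v := opword X s2 u.
have Dv : D v by apply: opword_stable.
have DXXv : D (X top (X (widen j) v)) by do 2 apply: X_stable.
have Dsum : D (\sum_(k < n.+1) c j k *: X k v).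
  by apply: (subspace_sum D_subspace) => k; apply: X_stable.
have lin_s1 := linear_on_opword X_stable X_linear s1.
have -> : X (widen j) (X top v) = X top (X (widen j) v) + \sum_(k < n.+1) c j k *: X k v.
  by rewrite -X_commute // addrC subrK.
rewrite (linear_onD lin_s1 DXXv Dsum) (linear_on_sum D_subspace _ _ lin_s1); last first.
  by move=> k; apply: X_stable.
rewrite (ip_addr ip_inner) (ip_sumr ip_inner).
apply: le_trans (le_normcD _ _) _; rewrite lerD2l.
apply: le_trans (normc_sum _ _) _.
by apply: ler_sum => k _; rewrite normcM normc_conj opword_cat.
Qed.

Variables (m : nat -> R) (L K A : R) (N : nat).
Hypothesis m_gt0 : forall p, 0 < m p.
Hypothesis L_ge1 : 1 <= L.
Hypothesis m_growth : forall p : nat, (1 <= p)%N -> p%:R * m p.-1 <= L * m p.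
Hypotheses (K_gt0 : 0 < K) (A_gt0 : 0 < A) (N_gt0 : (0 < N)%N).
Hypothesis pairing_sorted :
  forall g, inversions g = 0%N -> pairing g <= K * A ^+ size g * m (size g).

Definition comm_size : R := \sum_(j < n) \sum_(k < n.+1) normc (c j k).
Definition rate : R := A + 2 * comm_size * L.
Definition rho : R := 1 + (2 * N%:R)^-1.
Definition level_bound (l : nat) : R := K * (rate * N%:R) ^+ l * m l / l`!%:R.
Definition pairing_bound (l i : nat) : R := level_bound l * rho ^+ i.

Let N_gt0' : 0 < N%:R :> R. Proof. by rewrite ltr0n. Qed.

Lemma comm_size_ge0 : 0 <= comm_size.
Proof. by apply: sumr_ge0 => j _; apply: sumr_ge0 => k _; apply: normc_ge0. Qed.

Lemma comm_row_le j : \sum_(k < n.+1) normc (c j k) <= comm_size.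
Proof.
rewrite /comm_size (bigD1 j) //= lerDl.
by apply: sumr_ge0 => i _; apply: sumr_ge0 => k _; apply: normc_ge0.
Qed.

Let commL_ge0 : 0 <= 2 * comm_size * L.
Proof. by rewrite !mulr_ge0 ?comm_size_ge0 //; apply: le_trans ler01 L_ge1. Qed.

Lemma A_le_rate : A <= rate.
Proof. by have := commL_ge0; rewrite /rate; lra. Qed.

Lemma rate_gt0 : 0 < rate.
Proof. by have := A_gt0; have := A_le_rate; lra. Qed.

Lemma rho_ge1 : 1 <= rho.
Proof. by have := N_gt0'; rewrite /rho lerDl invr_ge0; lra. Qed.

Lemma level_bound_ge0 l : 0 <= level_bound l.
Proof.
rewrite /level_bound divr_ge0 ?ler0n // !mulr_ge0 ?exprn_ge0 ?(ltW K_gt0) ?(ltW (m_gt0 l)) //.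
by rewrite mulr_ge0 ?ler0n ?(ltW rate_gt0).
Qed.

Lemma pairing_bound_ge0 l i : 0 <= pairing_bound l i.
Proof. by rewrite mulr_ge0 ?level_bound_ge0 ?exprn_ge0 // (le_trans ler01 rho_ge1). Qed.

Lemma pairing_bound_mono l i i' : (i <= i')%N -> pairing_bound l i <= pairing_bound l i'.
Proof. by move=> ii'; rewrite ler_wpM2l ?level_bound_ge0 // ler_weXn2l ?rho_ge1. Qed.

Lemma sorted_le_level_bound l : (l <= N)%N -> K * A ^+ l * m l <= level_bound l.
Proof.
move=> l_le; have fact_gt0' : 0 < l`!%:R :> R by rewrite ltr0n fact_gt0.
rewrite /level_bound ler_pdivlMr //.
have -> : K * A ^+ l * m l * l`!%:R = (K * m l) * (A ^+ l * l`!%:R) by ring.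
have -> : K * (rate * N%:R) ^+ l * m l = (K * m l) * (rate ^+ l * (N ^ l)%N%:R).
  by rewrite natrX exprMn; ring.
apply: ler_wpM2l; first by rewrite mulr_ge0 // ltW.
apply: ler_pM; rewrite ?exprn_ge0 ?ler0n ?(ltW A_gt0) //.
  by rewrite lerXn2r ?nnegrE ?(ltW A_gt0) ?(ltW rate_gt0) ?A_le_rate.
by rewrite ler_nat fact_le_expn.
Qed.

Lemma level_bound_shift l : rate * N%:R * level_bound l <= L * level_bound l.+1.
Proof.
have fact_gt0' : 0 < l`!%:R :> R by rewrite ltr0n fact_gt0.
have rateN_gt0 : 0 < rate * N%:R by rewrite mulr_gt0 ?rate_gt0.
set Q := K * (rate * N%:R) ^+ l.+1 / l.+1`!%:R.
have Q_ge0 : 0 <= Q.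
  by rewrite /Q divr_ge0 ?ler0n // mulr_ge0 ?exprn_ge0 ?(ltW K_gt0) ?(ltW rateN_gt0).
have -> : rate * N%:R * level_bound l = Q * (l.+1%:R * m l).
  rewrite /Q /level_bound factS natrM exprS; field.
  by rewrite !lt0r_neq0 // addrC natr1 ltr0Sn.
have -> : L * level_bound l.+1 = Q * (L * m l.+1).
  by rewrite /Q /level_bound; field; rewrite lt0r_neq0 // ltr0n fact_gt0.
by rewrite ler_wpM2l // (m_growth (isT : (1 <= l.+1)%N)).
Qed.

Lemma pairing_bound_step l i :
  pairing_bound l.+1 i + comm_size * pairing_bound l i <= pairing_bound l.+1 i.+1.
Proof.
rewrite /pairing_bound exprS.
have rho_pow_ge0 : 0 <= rho ^+ i by rewrite exprn_ge0 // (le_trans ler01 rho_ge1).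
have rateN_gt0 : 0 < rate * N%:R by rewrite mulr_gt0 ?rate_gt0.
suff shift : comm_size * level_bound l <= level_bound l.+1 * (2 * N%:R)^-1.
  by have := ler_wpM2r rho_pow_ge0 shift; rewrite /rho; lra.
rewrite -(ler_pM2r rateN_gt0).
have -> : level_bound l.+1 * (2 * N%:R)^-1 * (rate * N%:R) = rate / 2 * level_bound l.+1.
  by field; rewrite pnatr_eq0 -lt0n.
have -> : comm_size * level_bound l * (rate * N%:R) = comm_size * (rate * N%:R * level_bound l).
  by ring.
apply: le_trans (ler_wpM2l comm_size_ge0 (level_bound_shift l)) _.
rewrite mulrA ler_wpM2r ?level_bound_ge0 // /rate.
by have := commL_ge0; have := A_gt0; lra.
Qed.

(* Moving [X_n] left past [X_j] removes one inversion; every commutator term is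
   one letter shorter and has fewer inversions. *)
Lemma pairing_le_bound l : (l <= N)%N ->
  forall i g, size g = l -> (inversions g <= i)%N -> pairing g <= pairing_bound l i.
Proof.
have sorted_le l' i g : inversions g = 0%N -> size g = l' -> (l' <= N)%N ->
    pairing g <= pairing_bound l' i.
  move=> inv0 <- le_N; apply: le_trans (pairing_sorted inv0) _.
  apply: le_trans (sorted_le_level_bound le_N) _.
  by apply: le_trans (pairing_bound_mono _ (leq0n i)); rewrite /pairing_bound mulr1.
elim: l => [|l IHl] l_le i g size_g inv_le.
  by apply: sorted_le => //; case: g size_g {inv_le}.
elim: i => [|i IHi] in g size_g inv_le *; first by apply: sorted_le => //; lia.
have [inv_le_i|inv_gt_i] := leqP (inversions g) i.
  exact: le_trans (IHi g size_g inv_le_i) (pairing_bound_mono _ (leqnSn i)).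
have [s1 [j [s2 g_eq]]] := inversions_gt0 (leq_ltn_trans (leq0n i) inv_gt_i).
rewrite g_eq size_cat /= in size_g inv_le *.
apply: le_trans (pairing_commute s1 j s2) _; apply: le_trans (pairing_bound_step l i).
apply: lerD; first by apply: IHi; rewrite ?size_cat //; move: inv_le; rewrite inversions_swap.
apply: (@le_trans _ _ (\sum_(k < n.+1) normc (c j k) * pairing_bound l i)).
  apply: ler_sum => k _; apply: ler_wpM2l; first exact: normc_ge0.
  apply: IHl; first exact: ltnW.
    by rewrite size_cat /=; lia.
  by have := inversions_contract s1 j k s2; lia.
by rewrite -mulr_suml ler_wpM2r ?pairing_bound_ge0 ?comm_row_le.
Qed.

Lemma pairing_bound_final : pairing_bound N (N * N) <= K * (8 * rate) ^+ N * m N.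
Proof.
have fact_gt0' : 0 < N`!%:R :> R by rewrite ltr0n fact_gt0.
have rho_ge0 : 0 <= rho by apply: le_trans ler01 rho_ge1.
have Kmr_ge0 : 0 <= K * rate ^+ N * m N.
  by rewrite !mulr_ge0 ?exprn_ge0 ?(ltW K_gt0) ?(ltW rate_gt0) ?(ltW (m_gt0 N)).
have -> : pairing_bound N (N * N) =
    (K * rate ^+ N * m N) * ((N%:R ^+ N / N`!%:R) * rho ^+ (N * N)).
  by rewrite /pairing_bound /level_bound exprMn; field; apply/lt0r_neq0.
have -> : K * (8 * rate) ^+ N * m N = (K * rate ^+ N * m N) * (4 ^+ N * 2 ^+ N).
  have -> : (4 : R) ^+ N * 2 ^+ N = 8 ^+ N by rewrite -exprMn; congr (_ ^+ _); lra.
  by rewrite exprMn; ring.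
rewrite ler_wpM2l // ler_pM ?divr_ge0 ?exprn_ge0 ?ler0n ?(ltW fact_gt0') //.
  by rewrite ler_pdivrMr // exprnn_le_fact.
by rewrite exprM lerXn2r ?nnegrE ?exprn_ge0 ?expr_half_inv_le2.
Qed.

End Reordering.

Section Restriction.
Variables (R : realType) (V : lmodType R[i]) (ip : V -> V -> R[i]) (n : nat).
Variables (X : 'I_n.+1 -> V -> V) (m : nat -> R) (u : V).
Hypothesis m0 : m 0 = 1.

Lemma S_vec_widen :
  S_vec ip X (fun _ => m) u ->
  S_vec ip (fun j : 'I_n => X (widen_ord (leqnSn n) j)) (fun _ => m) u.
Proof.
move=> [A [C [A_gt0 [C_gt0 bound]]]]; exists A, C; split=> //; split=> // b b_gt0.
have := bound (map (widen_ord (leqnSn n)) b).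
by rewrite size_map opword_map (seq_weight_widen m0) => /(_ b_gt0).
Qed.

Lemma S_vec_top : S_vec ip X (fun _ => m) u -> S_vec1 ip (X ord_max) m u.
Proof.
move=> [A [C [A_gt0 [C_gt0 bound]]]]; exists A, C; split=> //; split=> // k k_gt0.
have := bound (nseq k ord_max).
by rewrite size_nseq opword_nseq (seq_weight_nseq_max m0) => /(_ k_gt0).
Qed.

End Restriction.

Lemma S_vec1_bound (R : realType) (V : lmodType R[i]) (ip : V -> V -> R[i])
    (Y : V -> V) (m : nat -> R) u :
  (forall p, 0 < m p) -> m 0 = 1 -> S_vec1 ip Y m u ->
  exists C A : R, [/\ 0 < C, 0 < A & forall k, hnorm ip (iter k Y u) <= C * A ^+ k * m k].
Proof.
move=> m_gt0 m0 [A [C [A_gt0 [C_gt0 bound]]]].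
have u_ge0 := hnorm_ge0 ip u.
exists (C + hnorm ip u), A; split=> //; first by lra.
case=> [|k]; first by rewrite expr0 m0 !mulr1; lra.
apply: le_trans (bound k.+1 isT) _.
by rewrite ler_wpM2r ?(ltW (m_gt0 _)) // ler_wpM2r ?exprn_ge0 ?(ltW A_gt0) //; lra.
Qed.

Lemma S_vec_bound (R : realType) (V : lmodType R[i]) (ip : V -> V -> R[i])
    N (Y : 'I_N -> V -> V) (m : nat -> R) u :
  (forall p, 0 < m p) -> m 0 = 1 -> cond_A1 m -> S_vec ip Y (fun _ => m) u ->
  exists C A : R, [/\ 0 < C, 0 < A &
    forall b, hnorm ip (opword Y b u) <= C * A ^+ size b * m (size b)].
Proof.
move=> m_gt0 m0 m_logconvex [A [C [A_gt0 [C_gt0 bound]]]].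
have u_ge0 := hnorm_ge0 ip u.
exists (C + hnorm ip u), A; split=> //; first by lra.
case=> [|x b]; first by rewrite expr0 m0 !mulr1 /=; lra.
apply: le_trans (bound (x :: b) isT) _.
rewrite ler_pM ?seq_weight_ge0 ?seq_weight_le_m //.
  by rewrite mulr_ge0 ?exprn_ge0 ?(ltW A_gt0) ?(ltW C_gt0).
by rewrite ler_wpM2r ?exprn_ge0 ?(ltW A_gt0) //; lra.
Qed.

Lemma geom_bound_weaken (R : realFieldType) (x C C' A A' mk : R) k :
  0 <= C -> C <= C' -> 0 <= A -> A <= A' -> 0 <= mk ->
  x <= C * A ^+ k * mk -> x <= C' * A' ^+ k * mk.
Proof.
move=> C_ge0 CC' A_ge0 AA' mk_ge0 /le_trans; apply.
by rewrite ler_wpM2r // ler_pM ?exprn_ge0 // lerXn2r ?nnegrE // (le_trans A_ge0).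
Qed.

Section Assembly.
Variables (R : realType) (V : lmodType R[i]) (ip : V -> V -> R[i]).
Hypothesis ip_inner : is_inner_product ip.
Variables (n : nat) (X : 'I_n.+1 -> V -> V) (D : V -> Prop).
Hypothesis D_subspace : subspace D.
Hypothesis X_stable : forall j u, D u -> D (X j u).
Hypothesis X_linear : forall j, linear_on D (X j).
Hypothesis X_sym : forall j, hermitian_on ip D (X j) \/ skew_hermitian_on ip D (X j).
Local Notation top := (@ord_max n).
Local Notation widen := (widen_ord (leqnSn n)).
Variable m : nat -> R.
Hypothesis m_gt0 : forall p, 0 < m p.
Hypothesis m0 : m 0 = 1.
Hypothesis m_logconvex : cond_A1 m.
Variable u : V.
Hypothesis Du : D u.

Lemma hnorm_opword_sqr_le al : hnorm ip (opword X al u) ^+ 2 <= pairing ip X u (rev al ++ al).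
Proof.
rewrite hnorm_sqr //; apply: le_trans (Re_le_normc _) _.
rewrite /pairing opword_cat -(normc_ip_opword_adjoint X_stable X_sym) //.
exact: opword_stable.
Qed.

Variables (C A : R).
Hypotheses (C_gt0 : 0 < C) (A_gt0 : 0 < A).
Hypothesis top_bound : forall k, hnorm ip (opword X (nseq k top) u) <= C * A ^+ k * m k.
Hypothesis widen_bound :
  forall b : seq 'I_n, hnorm ip (opword X (map widen b) u) <= C * A ^+ size b * m (size b).

Lemma pairing_sorted_le g :
  inversions g = 0%N -> pairing ip X u g <= C ^+ 2 * A ^+ size g * m (size g).
Proof.
move=> /inversions_eq0 [a [b ->]].
rewrite /pairing opword_cat normc_ipC //.
rewrite (normc_ip_opword_adjoint X_stable X_sym) //; last exact: opword_stable.
rewrite normc_ipC // rev_nseq; apply: le_trans (normc_ip_le ip_inner _ _) _.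
rewrite size_cat size_nseq size_map.
apply: le_trans (ler_pM (hnorm_ge0 _ _) (hnorm_ge0 _ _) (top_bound a) (widen_bound b)) _.
have -> : C * A ^+ a * m a * (C * A ^+ size b * m (size b)) =
          C ^+ 2 * A ^+ (a + size b) * (m a * m (size b)) by rewrite exprD; ring.
rewrite ler_wpM2l ?mulr_ge0 ?exprn_ge0 ?(ltW A_gt0) ?(ltW C_gt0) //.
exact: logconvex_superadditive.
Qed.

Variable c : 'I_n -> 'I_n.+1 -> R[i].
Hypothesis X_commute : forall j v, D v ->
  X (widen j) (X top v) - X top (X (widen j) v) = \sum_(k < n.+1) c j k *: X k v.
Hypothesis m1 : m 1 = 1.
Hypothesis m_moderate : cond_A2 m.
Hypothesis m_growth : cond_A3' m.

Lemma S_vec_of_sorted_bounds : S_vec ip X (fun _ => m) u.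
Proof.
have [L [L_ge1 growth]] := m_growth; have [H [_ moderate]] := m_moderate.
have H_ge1 : 1 <= H by have := moderate 1%N 0%N; rewrite m0 m1 !mulr1.
set Q := 8 * rate c L A * H ^+ n.+2.
have Q_gt0 : 0 < Q.
  apply: mulr_gt0; first by rewrite mulr_gt0 ?(rate_gt0 c L_ge1 A_gt0).
  exact/exprn_gt0/(lt_le_trans ltr01 H_ge1).
exists Q, C; split=> //; split=> // al al_gt0; set k := size al.
have k2_gt0 : (0 < k + k)%N by rewrite addn_gt0 al_gt0.
have pal_le : pairing ip X u (rev al ++ al) <= C ^+ 2 * (8 * rate c L A) ^+ (k + k) * m (k + k).
  have size_pal : size (rev al ++ al) = (k + k)%N by rewrite size_cat size_rev.
  apply: le_trans (pairing_bound_final c m_gt0 L_ge1 (exprn_gt0 2 C_gt0) A_gt0 k2_gt0).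
  apply: (pairing_le_bound ip_inner D_subspace X_stable X_linear X_commute Du m_gt0 L_ge1
    growth (exprn_gt0 2 C_gt0) A_gt0 k2_gt0 pairing_sorted_le (leqnn _) size_pal).
  by rewrite -size_pal inversions_le.
have w_ge0 := seq_weight_ge0 m_gt0 al.
rewrite -ler_sqr ?nnegrE ?hnorm_ge0 ?mulr_ge0 ?exprn_ge0 ?(ltW C_gt0) ?(ltW Q_gt0) //.
apply: le_trans (hnorm_opword_sqr_le al) _.
apply: le_trans pal_le _.
have -> : (C * Q ^+ k * seq_weight (fun _ => m) al) ^+ 2 =
    C ^+ 2 * (8 * rate c L A) ^+ (k + k) * (H ^+ (n.+2 * k) * seq_weight (fun _ => m) al) ^+ 2.
  have -> : Q ^+ k = (8 * rate c L A) ^+ k * H ^+ (n.+2 * k) by rewrite /Q exprMn exprM.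
  by rewrite exprD; set a := (8 * rate c L A) ^+ k; set h := H ^+ (n.+2 * k); ring.
have rate8_ge0 : 0 <= 8 * rate c L A by rewrite mulr_ge0 ?(ltW (rate_gt0 c L_ge1 A_gt0)).
rewrite ler_wpM2l ?mulr_ge0 ?exprn_ge0 ?(ltW C_gt0) //.
exact: m_double_le_seq_weight.
Qed.

End Assembly.

Theorem proposition3p3
  (R : realType) (V : lmodType R[i]) (ip : V -> V -> R[i])
  (Hhilb : hilbert_space ip)
  (n : nat) (hn : (1 <= n)%N)
  (X : 'I_n.+1 -> V -> V) (D : V -> Prop)
  (HD : subspace D)
  (Hinv : forall j u, D u -> D (X j u))
  (Hlin : forall j, linear_on D (X j))
  (Hherm : forall j, hermitian_on ip D (X j) \/ skew_hermitian_on ip D (X j))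
  (m : nat -> R) (Hmpos : forall p, 0 < m p)
  (HA0 : cond_A0 m) (HA1 : cond_A1 m) (HA2 : cond_A2 m) (HA3 : cond_A3' m)
  (Hcomm : forall j : 'I_n, exists c : 'I_n.+1 -> R[i], forall u, D u ->
      X (widen_ord (leqnSn n) j) (X ord_max u) - X ord_max (X (widen_ord (leqnSn n) j) u)
      = \sum_(k < n.+1) c k *: X k u)
  (u : V) (Du : D u) :
  S_vec ip X (fun _ => m) u <->
  (S_vec ip (fun j : 'I_n => X (widen_ord (leqnSn n) j)) (fun _ => m) u
   /\ S_vec1 ip (X ord_max) m u).
Proof.
have ip_inner : is_inner_product ip by case: Hhilb.
have [m0 m1] := HA0.
split=> [S_X | [S_X' S_top]]; first by split; [exact: S_vec_widen | exact: S_vec_top].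
have [c X_commute] := boolp.choice Hcomm.
have [C1 [A1 [C1_gt0 A1_gt0 top_bound]]] := S_vec1_bound Hmpos m0 S_top.
have [C2 [A2 [C2_gt0 A2_gt0 widen_bound]]] := S_vec_bound Hmpos m0 HA1 S_X'.
have [C_gt0 A_gt0] : 0 < C1 + C2 /\ 0 < A1 + A2 by split; lra.
apply: (S_vec_of_sorted_bounds ip_inner HD Hinv Hlin Hherm Hmpos m0 HA1 Du C_gt0 A_gt0 _ _
  X_commute m1 HA2 HA3) => [k | b].
  by rewrite opword_nseq; apply: geom_bound_weaken (top_bound k); have := Hmpos k; lra.
by rewrite opword_map; apply: geom_bound_weaken (widen_bound b); have := Hmpos (size b); lra.
Qed.
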